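(* Let $n\ge2$ and let $A=(a_{ij})\in\mathbb{R}^{n\times n}$ be pseudo-diagonalizable. (1) If $n=2$, then $A$ is separable if and only if $a_{11}+a_{22}=0$. (2) If $n\ge3$, then $A$ is separable if and only if $a_{ii}=0$ for all $i\in[n]$. (3) $A$ is an optimal-node matrix if and only if there exists $k\in[n]$ such that $a_{kk}\ge0$ and $a_{ii}\le0$ for all $i\in[n]$ with $i\ne k$.
   Context: Max-plus conventions: $\varepsilon=-\infty$, $\oplus=\max$, $\otimes=+$, $(A\otimes B)_{ij}=\max_t(A_{it}+B_{tj})$. A matrix $P\in\overline{\mathbb{R}}^{n\times n}$ is invertible iff it has exactly one real entry in each row and column (others $\varepsilon$); $A,B$ are similar if $B=P^{-1}\otimes A\otimes P$ for invertible $P$. A square matrix is pseudo-diagonal if its diagonal entries are real and off-diagonal entries equal the real number $0$; pseudo-diagonalizable means similar to a pseudo-diagonal matrix. A finite matrix $A=(a_{ij})$ is separable if there are reals $u_i,v_j$ with $a_{ij}=u_i+v_j$ for all $i,j$; it is an optimal-node matrix if there is $k\in[n]$ with $a_{ik}+a_{kj}\ge a_{il}+a_{lj}$ for all $i,j,l\in[n]$. *)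

(* Max-plus semiring Rbar_max = R ∪ {ε}, encoded as option R
   with None = ε = -oo. *)
From HB Require Import structures.
From mathcomp Require Import all_boot all_order all_algebra.
From mathcomp Require Import reals.
Set Implicit Arguments. Unset Strict Implicit. Unset Printing Implicit Defensive.
Import Order.TTheory GRing.Theory Num.Theory.
Local Open Scope ring_scope.

Section MaxPlus.
Variable R : realType.

Definition mp_add (x y : option R) : option R :=
  match x, y with
  | None, _ => y
  | _, None => x
  | Some a, Some b => Some (Num.max a b)
  end.

Definition mp_mul (x y : option R) : option R :=
  match x, y with
  | Some a, Some b => Some (a + b)
  | _, _ => None
  end.

Definition mp_mxmul (m n p : nat) (A : 'M[option R]_(m, n)) (B : 'M[option R]_(n, p))
  : 'M[option R]_(m, p) :=
  \matrix_(i, j) \big[mp_add/None]_(t < n) mp_mul (A i t) (B t j).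

Definition mp_id (n : nat) : 'M[option R]_n :=
  \matrix_(i, j) if i == j then Some 0 else None.

Definition mp_inverse (n : nat) (P Q : 'M[option R]_n) : Prop :=
  mp_mxmul P Q = mp_id n /\ mp_mxmul Q P = mp_id n.

Definition mp_similar (n : nat) (A B : 'M[option R]_n) : Prop :=
  exists P Q : 'M[option R]_n,
    mp_inverse P Q /\ B = mp_mxmul (mp_mxmul Q A) P.

Definition pseudo_diagonal (n : nat) (D : 'M[option R]_n) : Prop :=
  (forall i, exists d : R, D i i = Some d) /\
  (forall i j, i != j -> D i j = Some 0).

Definition pseudo_diagonalizable (n : nat) (A : 'M[option R]_n) : Prop :=
  exists D, pseudo_diagonal D /\ mp_similar A D.

Definition fin_mx (n : nat) (A : 'M[R]_n) : 'M[option R]_n := map_mx Some A.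

Definition separable (n : nat) (A : 'M[R]_n) : Prop :=
  exists u v : 'I_n -> R, forall i j, A i j = u i + v j.

Definition optimal_node (n : nat) (A : 'M[R]_n) : Prop :=
  exists k : 'I_n, forall i j l : 'I_n, A i l + A l j <= A i k + A k j.

End MaxPlus.

(* A max-plus invertible matrix is a generalized permutation matrix, so
   conjugating the finite matrix A by it only permutes the indices and adds a
   potential: (P^-1 ⊗ A ⊗ P)_{ij} = a_{s(i)s(j)} - p_i + p_j.
   Pseudo-diagonality of the result therefore says exactly that the
   off-diagonal entries of A have the form x_i - x_j, while its diagonal is
   arbitrary.  For such matrices separability is the rectangle rule
   a_ij + a_kl = a_il + a_kj, and in the optimal-node inequality the
   potential cancels, leaving only diagonal contributions to compare. *)
From HB Require Import structures.
From mathcomp Require Import all_boot all_order all_algebra.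
From mathcomp Require Import reals.
From mathcomp Require Import fingroup perm lra.
Set Implicit Arguments.
Unset Strict Implicit.
Unset Printing Implicit Defensive.
Import Order.TTheory GRing.Theory Num.Theory.
Local Open Scope ring_scope.

Section MaxPlusSums.
Variable R : realType.

Lemma mp_addA : associative (@mp_add R).
Proof. by case=> [a|] [b|] [c|] //=; rewrite maxA. Qed.

Lemma mp_addC : commutative (@mp_add R).
Proof. by case=> [a|] [b|] //=; rewrite maxC. Qed.

Lemma mp_add0l : left_id None (@mp_add R).
Proof. by case. Qed.

HB.instance Definition _ :=
  Monoid.isComLaw.Build (option R) None (@mp_add R) mp_addA mp_addC mp_add0l.

Lemma mp_add0r : right_id None (@mp_add R).
Proof. by case. Qed.

Lemma mp_add_eq_None (x y : option R) : mp_add x y = None -> x = None.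
Proof. by case: x; case: y. Qed.

Lemma mp_mul0r (x : option R) : mp_mul x None = None.
Proof. by case: x. Qed.

Lemma mp_mulS_eq_None (a : R) y : mp_mul (Some a) y = None -> y = None.
Proof. by case: y. Qed.

Variable n : nat.
Implicit Types F : 'I_n -> option R.

Lemma big_mp_add_eq_None F :
  \big[@mp_add R/None]_(t < n) F t = None -> forall t, F t = None.
Proof. by move=> H t; move: H; rewrite (bigD1 t) //= => /mp_add_eq_None. Qed.

Lemma big_mp_add_neq_None F :
  \big[@mp_add R/None]_(t < n) F t <> None -> exists t, F t <> None.
Proof.
move=> H; have [t /eqP Ft|F0] := pickP (fun t => F t != None); first by exists t.
by case: H; apply: big1 => t _; move/negbFE/eqP: (F0 t).
Qed.

Lemma big_mp_add1 F t0 :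
  (forall t, t != t0 -> F t = None) -> \big[@mp_add R/None]_(t < n) F t = F t0.
Proof. by move=> F0; rewrite (bigD1 t0) //= big1 ?mp_add0r. Qed.

End MaxPlusSums.

Section Monomial.
Variables (R : realType) (n : nat).

Definition mp_perm_mx (s : {perm 'I_n}) (p : 'I_n -> R) : 'M[option R]_n :=
  \matrix_(t, j) if t == s j then Some (p j) else None.

Lemma mp_inverse_perm_mx (P Q : 'M[option R]_n) : mp_inverse P Q ->
  exists s p, P = mp_perm_mx s p /\ Q = (mp_perm_mx s (fun i => - p i))^T.
Proof.
case=> PQ QP.
have QPE i j : \big[@mp_add R/None]_(t < n) mp_mul (Q i t) (P t j)
    = if i == j then Some 0 else None.
  by have := congr1 (fun M : 'M_n => M i j) QP; rewrite !mxE.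
have PQE i j : \big[@mp_add R/None]_(t < n) mp_mul (P i t) (Q t j)
    = if i == j then Some 0 else None.
  by have := congr1 (fun M : 'M_n => M i j) PQ; rewrite !mxE.
have /fin_all_exists [tau tauP] i : exists t, Q i t <> None /\ P t i <> None.
  have [t QPt] : exists t, mp_mul (Q i t) (P t i) <> None.
    by apply: big_mp_add_neq_None; rewrite QPE eqxx.
  by exists t; case: (Q i t) QPt; case: (P t i).
have P_row i j : j != i -> P (tau i) j = None.
  move=> ji; move: (QPE i j); rewrite eq_sym (negbTE ji).
  move=> /big_mp_add_eq_None/(_ (tau i)).
  by case: (Q i (tau i)) (tauP i).1 => // a _ /mp_mulS_eq_None.
have tau_inj : injective tau.
  move=> i i' E; apply/eqP; apply/negPn/negP => ii'.
  by apply: (tauP i).2; rewrite E P_row // eq_sym.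
pose s := perm tau_inj.
have Q0 i t : t != s i -> Q i t = None.
  rewrite permE => ti; move: (PQE (tau i) t); rewrite eq_sym (negbTE ti).
  move=> /big_mp_add_eq_None/(_ i).
  by case: (P (tau i) i) (tauP i).2 => // a _ /mp_mulS_eq_None.
have P0 t j : t != s j -> P t j = None.
  move=> tj; have := P_row (s^-1 t)%g j.
  rewrite -(permE tau_inj) -/s permKV; apply.
  by apply: contra tj => /eqP ->; rewrite permKV.
pose p i := odflt 0 (P (s i) i).
have Pp i : P (s i) i = Some (p i).
  by rewrite /p permE; case: (P (tau i) i) (tauP i).2.
have Qp i : Q i (s i) = Some (- p i).
  move: (QPE i i); rewrite eqxx (@big_mp_add1 _ _ _ (s i)); last first.
    by move=> t /Q0 ->.
  rewrite Pp; case: (Q i (s i)) => //= q [qp].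
  by congr Some; lra.
exists s, p; split; apply/matrixP => i j; rewrite !mxE.
  by case: eqVneq => [->|/P0 //]; rewrite Pp.
by case: eqVneq => [->|/Q0 //]; rewrite Qp.
Qed.

Lemma mp_conj_perm_mx (s : {perm 'I_n}) (p : 'I_n -> R) (A : 'M[R]_n) :
  mp_mxmul (mp_mxmul (mp_perm_mx s (fun i => - p i))^T (fin_mx A))
           (mp_perm_mx s p)
  = fin_mx (\matrix_(i, j) (A (s i) (s j) - p i + p j)).
Proof.
apply/matrixP => i j; rewrite !mxE (@big_mp_add1 _ _ _ (s j)); last first.
  by move=> t tj; rewrite [mp_perm_mx _ _ t j]mxE (negbTE tj) mp_mul0r.
rewrite !mxE eqxx (@big_mp_add1 _ _ _ (s i)); last first.
  by move=> t ti; rewrite !mxE (negbTE ti).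
by rewrite !mxE eqxx /=; congr Some; lra.
Qed.

Lemma pseudo_diagonalizable_potential (A : 'M[R]_n) :
  pseudo_diagonalizable (fin_mx A) ->
  exists x : 'I_n -> R, forall i j, i != j -> A i j = x i - x j.
Proof.
case=> D [[_ D_off] [P [Q [/mp_inverse_perm_mx [s [p [-> ->]]] DE]]]].
exists (fun a => p (s^-1 a))%g => a b ab.
have ab' : (s^-1 a != s^-1 b)%g by rewrite (inj_eq perm_inj).
by move: (D_off _ _ ab'); rewrite DE mp_conj_perm_mx !mxE !permKV => -[]; lra.
Qed.

End Monomial.

Section Separable.
Variable R : realType.

Lemma separable_rect (n : nat) (A : 'M[R]_n) : separable A ->
  forall i j k l, A i j + A k l = A i l + A k j.
Proof. by case=> u [v uv] i j k l; rewrite !uv; lra. Qed.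

Lemma separable2P (A : 'M[R]_2) :
  separable A <->
  A ord0 ord0 + A (inord 1) (inord 1) = A ord0 (inord 1) + A (inord 1) ord0.
Proof.
split=> [/separable_rect -> //|rect].
have ord2 (i : 'I_2) : i = ord0 \/ i = inord 1.
  by case: i => [[|[|//]] ?]; [left|right]; apply/val_inj; rewrite //= inordK.
exists (fun i => A i ord0), (fun j => A ord0 j - A ord0 ord0) => i j.
by case: (ord2 i) => ->; case: (ord2 j) => ->; lra.
Qed.

End Separable.

Section OffDiagonalPotential.
Variables (R : realType) (n : nat) (A : 'M[R]_n) (x : 'I_n -> R).
Hypothesis A_off : forall i j, i != j -> A i j = x i - x j.

Lemma potential_mx_path i l j :
  A i l + A l j = x i - x j + (i == l)%:R * A i i + (l == j)%:R * A l l.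
Proof.
case: (eqVneq i l) => [->{i}|il]; case: (eqVneq l j) => [<-|lj].
- by rewrite mul1r; lra.
- by rewrite mul1r mul0r (A_off lj); lra.
- by rewrite mul1r mul0r (A_off il); lra.
- by rewrite !mul0r (A_off il) (A_off lj); lra.
Qed.

Lemma potential_separableP : (2 < n)%N -> separable A <-> forall i, A i i = 0.
Proof.
move=> n_gt2; split=> [/separable_rect rect i|diag0].
  have /card_gt1P [j [k [/[!inE] ji ki jk]]] : (1 < #|predC1 i|)%N.
    by rewrite cardC1 card_ord; case: n n_gt2 => [|[|[]]].
  have ik : i != k by rewrite eq_sym.
  by have := rect i i j k; rewrite (A_off jk) (A_off ik) (A_off ji); lra.
exists x, (fun j => - x j) => i j.
by case: (eqVneq i j) => [->|/A_off ->]; rewrite ?diag0; lra.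
Qed.

Lemma potential_optimal_nodeP : (1 < n)%N ->
  optimal_node A <-> exists k, 0 <= A k k /\ forall i, i != k -> A i i <= 0.
Proof.
move=> n_gt1; split=> [[k opt]|[k [Akk_ge0 Aii_le0]]].
  exists k; split=> [|i ik].
    have /card_gt0P [l /[!inE] lk] : (0 < #|predC1 k|)%N.
      by rewrite cardC1 card_ord; case: n n_gt1 => [|[]].
    have := opt k k l; rewrite !potential_mx_path eqxx eq_sym (negbTE lk).
    by rewrite !mul0r !mul1r; lra.
  have := opt i i i; rewrite !potential_mx_path eqxx (negbTE ik).
  by rewrite eq_sym (negbTE ik) !mul0r !mul1r; lra.
exists k => i j l; rewrite !potential_mx_path.
have kj : 0 <= (k == j)%:R * A k k by rewrite mulr_ge0.
have ik : 0 <= (i == k)%:R * A i i.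
  by case: eqVneq => [->|_]; rewrite ?mul0r ?mul1r.
case: (eqVneq l k) => [->|lk]; first lra.
have il : (i == l)%:R * A i i <= 0.
  by case: eqVneq => [->|_]; rewrite ?mul0r ?mul1r ?Aii_le0.
have lj : (l == j)%:R * A l l <= 0 by rewrite mulr_ge0_le0 ?Aii_le0.
lra.
Qed.

End OffDiagonalPotential.

Theorem theorem4p19 (R : realType) (m : nat) (A : 'M[R]_m.+2) :
  pseudo_diagonalizable (fin_mx A) ->
  (m = 0%N ->
     (separable A <-> A ord0 ord0 + A (inord 1) (inord 1) = 0)) /\
  ((1 <= m)%N ->
     (separable A <-> forall i, A i i = 0)) /\
  (optimal_node A <->
     exists k : 'I_m.+2, 0 <= A k k /\ (forall i, i != k -> A i i <= 0)).
Proof.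
move=> /pseudo_diagonalizable_potential [x A_off].
split; [|split].
- move=> m0; subst m.
  have ne01 : (ord0 : 'I_2) != inord 1 by rewrite -val_eqE /= inordK.
  have ne10 : (inord 1 : 'I_2) != ord0 by rewrite eq_sym.
  rewrite separable2P (A_off _ _ ne01) (A_off _ _ ne10).
  by split=> sum_diag; lra.
- by move=> m_gt0; apply: (potential_separableP A_off m_gt0).
- exact: (potential_optimal_nodeP A_off).
Qed.
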